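(* Let $m\ge2$ and let $A(\mathbf z)$, $\mathbf z=(z_1,\dots,z_m)$, be the $(2m+1)\times(2m+1)$ matrix whose rows and columns are indexed, in this order, by $s_0,s_1,\dots,s_m,s_1^{-1},\dots,s_m^{-1}$, with entries: column $s_0$ is zero; row $s_0$ has entry $z_j$ in columns $s_j$ and $s_j^{-1}$ ($1\le j\le m$); row $s_i$ ($1\le i\le m$) has entry $z_j$ in column $s_j$ for all $j$, entry $z_j$ in column $s_j^{-1}$ for $j\ne i$, and $0$ in column $s_i^{-1}$; row $s_i^{-1}$ has entry $z_j$ in column $s_j^{-1}$ for all $j$, entry $z_j$ in column $s_j$ for $j\ne i$, and $0$ in column $s_i$. Then, as a polynomial identity, $$\det(I-A(\mathbf z))=(1-z_1)\cdots(1-z_m)\,R(\mathbf z),\qquad R(\mathbf z)=1-\sum_{l=1}^{m}(2l-1)\sum_{1\le i_1<\dots<i_l\le m} z_{i_1}\cdots z_{i_l},$$ where $I$ is the $(2m+1)\times(2m+1)$ identity matrix. *)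

From mathcomp Require Import all_boot all_order all_algebra.
Set Implicit Arguments. Unset Strict Implicit. Unset Printing Implicit Defensive.
Import GRing.Theory.
Local Open Scope ring_scope.

(* Labels of the rows/columns: s_0, s_j (j : 'I_m), s_j^{-1} (j : 'I_m). *)
Inductive gen (m : nat) := S0 | Sp of 'I_m | Sm of 'I_m.

(* Index i : 'I_(1 + m + m) is decoded in the order
   s_0, s_1, ..., s_m, s_1^{-1}, ..., s_m^{-1}. *)
Definition decode (m : nat) (i : 'I_(1 + m + m)) : gen m :=
  match split i with
  | inl k => match split k with
             | inl _ => @S0 m
             | inr j => Sp j
             end
  | inr j => Sm j
  end.

Definition entryA (R : comNzRingType) (m : nat) (z : 'I_m -> R)
  (r c : gen m) : R :=
  match r, c with
  | _, S0 => 0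
  | S0, Sp j => z j
  | S0, Sm j => z j
  | Sp i, Sp j => z j
  | Sp i, Sm j => if j == i then 0 else z j
  | Sm i, Sm j => z j
  | Sm i, Sp j => if j == i then 0 else z j
  end.

Definition matA (R : comNzRingType) (m : nat) (z : 'I_m -> R)
  : 'M[R]_(1 + m + m) :=
  \matrix_(r, c) entryA z (decode r) (decode c).

Definition polyR (R : comNzRingType) (m : nat) (z : 'I_m -> R) : R :=
  1 - \sum_(1 <= l < m.+1)
        ((2 * l - 1)%N%:R * \sum_(S : {set 'I_m} | #|S| == l) \prod_(i in S) z i).

(* Column s_0 of I - A is the first unit vector, so det(I - A) is the
   determinant of the 2m x 2m block matrix [[X, W], [W, X]] with X = I - Z and
   W = D - Z, where D = diag(z) and every row of Z equals z.  Such a block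
   matrix has determinant det(X + W) det(X - W).  Here X - W = diag(1 - z),
   while X + W = diag(1 + z) - 2 Z is a rank-one perturbation of a diagonal
   matrix, with determinant prod_k (1 + z_k) - 2 sum_j z_j prod_(k <> j) (1 + z_k).
   Expanding over subsets S of {1..m}, this is sum_S (1 - 2|S|) z^S = R(z). *)

From mathcomp Require Import all_boot all_order all_algebra.
From mathcomp Require Import ring.
Set Implicit Arguments. Unset Strict Implicit. Unset Printing Implicit Defensive.
Import GRing.Theory.
Local Open Scope ring_scope.

Section SubsetExpansion.
Variables (R : comNzRingType) (I : finType).

Lemma prodrD_subsets (x y : I -> R) :
  \prod_i (x i + y i) = \sum_(S : {set I}) \prod_(i in S) x i * \prod_(i in ~: S) y i.
Proof.
rewrite bigA_distr; apply: eq_bigr => S _; rewrite (bigID (mem S)) /=.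
by congr (_ * _); apply: eq_big => i; rewrite ?in_setC //; case: (i \in S).
Qed.

Lemma prod1D_subsets (x : I -> R) :
  \prod_i (1 + x i) = \sum_(S : {set I}) \prod_(i in S) x i.
Proof.
under eq_bigr do rewrite addrC.
by rewrite prodrD_subsets; apply: eq_bigr => S _; rewrite big1_eq mulr1.
Qed.

Lemma sum_mul_prod1D_subsets (x : I -> R) :
  \sum_j x j * \prod_(k | k != j) (1 + x k) =
  \sum_(S : {set I}) #|S|%:R * \prod_(i in S) x i.
Proof.
have in_subsets j : x j * \prod_(k | k != j) (1 + x k) =
    \sum_(S : {set I}) (j \in S)%:R * \prod_(i in S) x i.
  have -> : x j * \prod_(k | k != j) (1 + x k) = \prod_k (x k + (k != j)%:R).
    rewrite [RHS](bigD1 j) //= eqxx addr0; congr (_ * _).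
    by apply: eq_bigr => k ->; rewrite addrC.
  rewrite prodrD_subsets; apply: eq_bigr => S _; rewrite mulrC; congr (_ * _).
  have [jS | jNS] := boolP (j \in S).
    apply: big1 => k; rewrite in_setC => kNS.
    by have -> : k != j by apply: contraNneq kNS => ->.
  by rewrite (bigD1 j) ?in_setC //= eqxx mul0r.
under eq_bigr do rewrite in_subsets.
rewrite exchange_big; apply: eq_bigr => S _; rewrite -big_distrl /=.
rewrite -sum1_card natr_sum [in RHS]big_mkcond; congr (_ * _).
by apply: eq_bigr => i _; case: (i \in S).
Qed.

End SubsetExpansion.

Section DetRankOne.
Variable R : comNzRingType.

Lemma det_delta_row0 n (A : 'M[R]_n.+1) :
  (forall j, A ord0 j = (ord0 == j)%:R) -> \det A = \det (row' ord0 (col' ord0 A)).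
Proof.
move=> A0; rewrite (expand_det_row _ ord0) big_ord_recl big1 => [|j _].
  by rewrite A0 eqxx mul1r addr0 /cofactor expr0 mul1r.
by rewrite A0 eq_liftF mul0r.
Qed.

Lemma det_delta_col0 n (A : 'M[R]_n.+1) :
  (forall i, A i ord0 = (i == ord0)%:R) -> \det A = \det (row' ord0 (col' ord0 A)).
Proof.
move=> A0; rewrite -det_tr det_delta_row0 => [|j]; last by rewrite mxE A0 eq_sym.
by rewrite -det_tr; congr (\det _); apply/matrixP => i j; rewrite !mxE.
Qed.

Lemma det_add_row0 n (A : 'M[R]_n.+1) (c : 'I_n.+1 -> R) : c ord0 = 0 ->
  \det (\matrix_(i, j) (A i j + c i * A ord0 j)) = \det A.
Proof.
move=> c0; pose F : 'M[R]_n.+1 := \matrix_(i, j) ((j == ord0)%:R * c i).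
have -> : \matrix_(i, j) (A i j + c i * A ord0 j) = (1%:M + F) *m A.
  apply/matrixP => i j; rewrite mulmxDl mul1mx !mxE (bigD1 ord0) //= big1.
    by rewrite !mxE eqxx mul1r addr0.
  by move=> k /negPf k0; rewrite !mxE k0 !mul0r.
rewrite det_mulmx det_trig; last first.
  apply/is_trig_mxP => i j ij; have /negPf j0 : j != ord0 by apply: contraTneq ij => ->.
  have /negPf ij' : i != j by rewrite neq_ltn ij.
  by rewrite !mxE ij' j0 mul0r addr0.
rewrite big1 ?mul1r // => i _; rewrite !mxE eqxx.
by case: eqP => [->|_]; rewrite ?c0 ?mulr0 ?mul0r addr0.
Qed.

Lemma det_rank1_row0 n (a u v : 'I_n.+1 -> R) :
  \det (\matrix_(i, j) (if i == ord0 then v j else (i == j)%:R * a i + u i * v j)) =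
  v ord0 * \prod_(i | i != ord0) a i.
Proof.
pose N : 'M[R]_n.+1 := \matrix_(i, j) (if i == ord0 then v j else (i == j)%:R * a i).
pose c i := if i == ord0 then 0 else u i.
have -> : \matrix_(i, j) (if i == ord0 then v j else (i == j)%:R * a i + u i * v j)
    = \matrix_(i, j) (N i j + c i * N ord0 j).
  apply/matrixP => i j; rewrite !mxE /c eqxx.
  by case: (i == ord0); rewrite ?mul0r ?addr0.
rewrite det_add_row0 /c ?eqxx // -det_tr det_trig; last first.
  apply/is_trig_mxP => i j ij; have /negPf j0 : j != ord0 by apply: contraTneq ij => ->.
  have /negPf ji : j != i by rewrite neq_ltn ij orbT.
  by rewrite !mxE j0 ji mul0r.
rewrite (bigD1 ord0) //= !mxE eqxx; congr (_ * _); apply: eq_bigr => i /negPf i0.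
by rewrite !mxE i0 eqxx mul1r.
Qed.

Lemma det_diag_add_rank1 n (a u v : 'I_n -> R) :
  \det (\matrix_(i, j) ((i == j)%:R * a i + u i * v j)) =
  \prod_i a i + \sum_j u j * v j * \prod_(k | k != j) a k.
Proof.
elim: n a u v => [|n IH] a u v; first by rewrite det_mx00 !big_ord0 addr0.
set M := \matrix_(i, j) _.
pose B : 'M[R]_n.+1 := \matrix_(i, j) (if i == ord0 then (ord0 == j)%:R else M i j).
pose C : 'M[R]_n.+1 :=
  \matrix_(i, j) (if i == ord0 then v j else (i == j)%:R * a i + u i * v j).
have -> : \det M = a ord0 * \det B + u ord0 * \det C.
  apply: (determinant_multilinear (i0 := ord0)).
  - by apply/rowP => j; rewrite !mxE eqxx mulrC.
  - by apply/matrixP => i j; rewrite !mxE lift_eqF.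
  - by apply/matrixP => i j; rewrite !mxE lift_eqF.
have -> : \det B = \det (\matrix_(i, j)
    ((i == j)%:R * a (lift ord0 i) + u (lift ord0 i) * v (lift ord0 j))).
  rewrite det_delta_row0 => [|j]; last by rewrite !mxE eqxx.
  congr (\det _); apply/matrixP => i j.
  by rewrite !mxE lift_eqF (inj_eq (@lift_inj _ ord0)).
rewrite IH det_rank1_row0 [in RHS]big_ord_recl [X in _ = _ + X]big_ord_recl /=.
have prod_lift j : \prod_(k | k != lift ord0 j) a k =
    a ord0 * \prod_(k | k != j) a (lift ord0 k).
  rewrite big_mkcond big_ord_recl eq_liftF -big_mkcond /=.
  by congr (_ * _); apply: eq_bigl => k; rewrite (inj_eq (@lift_inj _ ord0)).
under [X in _ = _ + (_ + X)]eq_bigr do rewrite prod_lift.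
rewrite mulrDr big_distrr /= -addrA mulrA [X in _ + X]addrC.
by congr (_ + (_ + _)); apply: eq_bigr => j _; rewrite mulrCA.
Qed.

End DetRankOne.

Lemma det_block_circulant (R : comNzRingType) n (X W : 'M[R]_n) :
  \det (block_mx X W W X) = \det (X + W) * \det (X - W).
Proof.
have reduce : block_mx 1%:M 1%:M 0 1%:M *m block_mx X W W X *m
    block_mx 1%:M (- 1%:M) 0 1%:M = block_mx (X + W) 0 W (X - W).
  rewrite !mulmx_block !(mul1mx, mulmx1, mul0mx, mulmx0, mulmxN, addr0, add0r).
  by congr block_mx; rewrite addrC ?addrKA ?subrr.
move/(congr1 determinant): reduce.
by rewrite !det_mulmx det_lblock !det_ublock !det1 !mul1r mulr1.
Qed.


Lemma polyR_subsets (R : comNzRingType) m (z : 'I_m -> R) :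
  polyR z = \sum_(S : {set 'I_m}) (1 - (2 * #|S|)%:R) * \prod_(i in S) z i.
Proof.
have regroup : \sum_(1 <= l < m.+1)
      ((2 * l - 1)%N%:R * \sum_(S : {set 'I_m} | #|S| == l) \prod_(i in S) z i) =
    \sum_(S : {set 'I_m} | S != set0) (2 * #|S| - 1)%N%:R * \prod_(i in S) z i.
  under eq_bigr do rewrite big_distrr.
  rewrite (exchange_big_dep xpredT) //= [RHS]big_mkcond; apply: eq_bigr => S _.
  under eq_bigl do rewrite eq_sym.
  rewrite big_nat1_eq card_gt0 ltnS (leq_trans (max_card _)) ?card_ord // andbT.
  by case: (S != set0).
rewrite /polyR regroup [RHS](bigD1 set0) //= cards0 big_set0 mulr1 subr0.
rewrite -sumrN; congr (_ + _); apply: eq_bigr => S nzS.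
by rewrite natrB ?muln_gt0 ?card_gt0 // -mulNr opprB.
Qed.

Lemma polyR_rank1 (R : comNzRingType) m (z : 'I_m -> R) :
  polyR z = \prod_i (1 + z i) + \sum_j (- 2) * z j * \prod_(k | k != j) (1 + z k).
Proof.
under [X in _ = _ + X]eq_bigr do rewrite -mulrA.
rewrite -mulr_sumr sum_mul_prod1D_subsets prod1D_subsets polyR_subsets.
rewrite mulr_sumr -big_split; apply: eq_bigr => S _; rewrite /= natrM; ring.
Qed.

Section FirstMinor.
Variables (R : comNzRingType) (m : nat) (z : 'I_m -> R).

Lemma decode0 : decode (ord0 : 'I_(1 + m + m)) = S0 m.
Proof.
have -> : (ord0 : 'I_(1 + m + m)) = lshift m (lshift m (ord0 : 'I_1)) by apply: val_inj.
by rewrite /decode !(unsplitK (inl _)).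
Qed.

Lemma decode_lift_lshift (k : 'I_m) :
  decode (lift ord0 (lshift m k) : 'I_(1 + m + m)) = Sp k.
Proof.
have -> : lift ord0 (lshift m k) = lshift m (rshift 1 k) :> 'I_(1 + m + m).
  exact: val_inj.
by rewrite /decode (unsplitK (inl _)) (unsplitK (inr _)).
Qed.

Lemma decode_lift_rshift (k : 'I_m) :
  decode (lift ord0 (rshift m k) : 'I_(1 + m + m)) = Sm k.
Proof.
have -> : lift ord0 (rshift m k) = rshift (1 + m) k :> 'I_(1 + m + m) by apply: val_inj.
by rewrite /decode (unsplitK (inr _)).
Qed.

Let Z : 'M[R]_m := \matrix_(i, j) z j.
Let D : 'M[R]_m := diag_mx (\row_j z j).

Lemma minor_1_sub_matA :
  row' ord0 (col' ord0 (1%:M - matA z)) =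
  block_mx (1%:M - Z) (D - Z) (D - Z) (1%:M - Z).
Proof.
apply/matrixP => i j; rewrite !mxE (inj_eq (@lift_inj _ ord0)).
case: (split_ordP i) => k ->; case: (split_ordP j) => l ->.
- by rewrite row_mxEl !mxE decode_lift_lshift decode_lift_lshift eq_lshift.
- rewrite row_mxEr !mxE decode_lift_lshift decode_lift_rshift eq_lrshift /= eq_sym.
  by case: eqP => [->|_]; rewrite ?subrr ?mulr0n ?sub0r.
- rewrite row_mxEl !mxE decode_lift_rshift decode_lift_lshift eq_rlshift /= eq_sym.
  by case: eqP => [->|_]; rewrite ?subrr ?mulr0n ?sub0r.
- by rewrite row_mxEr !mxE decode_lift_rshift decode_lift_rshift eq_rshift.
Qed.

End FirstMinor.

Theorem lemma1 (R : comNzRingType) (m : nat) (hm : (2 <= m)%N) (z : 'I_m -> R) :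
  \det (1%:M - matA z) = (\prod_(i < m) (1 - z i)) * polyR z.
Proof.
(* The identity holds for every m. *)
have col0_delta i : (1%:M - matA z) i ord0 = (i == ord0)%:R.
  by rewrite !mxE decode0; case: (decode i); rewrite /= subr0.
rewrite (det_delta_col0 col0_delta) minor_1_sub_matA det_block_circulant.
set Z := \matrix_(i, j) z j; set D := diag_mx _.
have -> : 1%:M - Z + (D - Z) = \matrix_(i, j) ((i == j)%:R * (1 + z i) + (- 2) * z j).
  apply/matrixP => i j; rewrite !mxE.
  by case: (i == j); rewrite ?mulr1n ?mulr0n ?mul1r ?mul0r; ring.
have -> : 1%:M - Z - (D - Z) = diag_mx (\row_j (1 - z j)).
  apply/matrixP => i j; rewrite !mxE.
  by case: (i == j); rewrite ?mulr1n ?mulr0n; ring.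
rewrite det_diag_add_rank1 det_diag polyR_rank1 mulrC; congr (_ * _).
by apply: eq_bigr => i _; rewrite mxE.
Qed.
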